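(* Let $(\Omega(\mathcal{A}),d)$ be a differential calculus on a complex algebra $\mathcal{A}$, with $\mathcal{E}=\Omega^1(\mathcal{A})$ a finitely generated projective right $\mathcal{A}$-module, such that: (1) $\mathcal{E}=\mathcal{Z}(\mathcal{E})\otimes_{\mathcal{Z}(\mathcal{A})}\mathcal{A}$ (via the multiplication map); (2) $\mathcal{E}\otimes_{\mathcal{A}}\mathcal{E}=\ker(\wedge)\oplus\mathcal{F}$ where $\mathcal{F}$ is a right $\mathcal{A}$-submodule and $Q=\wedge|_{\mathcal{F}}:\mathcal{F}\to\Omega^2(\mathcal{A})$ is a right $\mathcal{A}$-linear isomorphism; (3) the map $\sigma=2P_{\rm sym}-1$ satisfies $\sigma(\omega\otimes_{\mathcal{A}}\eta)=\eta\otimes_{\mathcal{A}}\omega$ for all $\omega,\eta\in\mathcal{Z}(\mathcal{E})$. If $g$ is a pseudo-Riemannian bilinear metric on $\mathcal{E}$, then there exists a unique connection on $\mathcal{E}$ which is torsionless and compatible with $g$ on $\mathcal{Z}(\mathcal{E})$.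
   Context: A differential calculus: $\Omega(\mathcal{A})=\oplus_{j\ge0}\Omega^j(\mathcal{A})$, $\Omega^0=\mathcal{A}$, bimodules $\Omega^j$, an $\mathcal{A}$-bimodule product $\wedge$ with $\wedge(\Omega^j\otimes_{\mathcal{A}}\Omega^k)\subseteq\Omega^{j+k}$, $d:\Omega^j\to\Omega^{j+1}$ with $d^2=0$ and $d(\omega\wedge\eta)=d\omega\wedge\eta+(-1)^{\deg\omega}\omega\wedge d\eta$, and $\Omega^j$ the right span of $da_0\wedge\cdots\wedge da_{j-1}$. $\wedge:\mathcal{E}\otimes_{\mathcal{A}}\mathcal{E}\to\Omega^2(\mathcal{A})$ is the induced product. $P_{\rm sym}$ is the idempotent on $\mathcal{E}\otimes_{\mathcal{A}}\mathcal{E}$ with image $\ker\wedge$ and kernel $\mathcal{F}$. For a bimodule $\mathcal{M}$, $\mathcal{Z}(\mathcal{M})=\{m:am=ma\ \forall a\in\mathcal{A}\}$, and $\mathcal{Z}(\mathcal{A})$ is the center of $\mathcal{A}$. A connection is a $\mathbb{C}$-linear $\nabla:\mathcal{E}\to\mathcal{E}\otimes_{\mathcal{A}}\mathcal{E}$ with $\nabla(\omega a)=\nabla(\omega)a+\omega\otimes_{\mathcal{A}}da$; torsionless means $\wedge\circ\nabla+d=0$. A pseudo-Riemannian bilinear metric is an $\mathcal{A}$-bimodule map $g:\mathcal{E}\otimes_{\mathcal{A}}\mathcal{E}\to\mathcal{A}$ with $g\circ\sigma=g$ such that $e\mapsto g(e\otimes_{\mathcal{A}}-)$ is a right module isomorphism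 $\mathcal{E}\to\mathrm{Hom}_{\mathcal{A}}(\mathcal{E},\mathcal{A})$. $\nabla$ is compatible with $g$ on $\mathcal{Z}(\mathcal{E})$ if for all $\omega,\eta\in\mathcal{Z}(\mathcal{E})$: $(g\otimes_{\mathcal{A}}\mathrm{id})\{\sigma_{23}(\nabla(\omega)\otimes_{\mathcal{A}}\eta)+\omega\otimes_{\mathcal{A}}\nabla(\eta)\}=d(g(\omega\otimes_{\mathcal{A}}\eta))$, with $\sigma_{23}=\mathrm{id}\otimes_{\mathcal{A}}\sigma$ on $\mathcal{E}^{\otimes_{\mathcal{A}}3}$ and $(g\otimes_{\mathcal{A}}\mathrm{id})(x\otimes y\otimes z)=g(x\otimes_{\mathcal{A}}y)z$. *)

(* Noncommutative differential calculus (degrees <= 2),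
   tensor products over A given by their universal property. *)
From HB Require Import structures.
From mathcomp Require Import all_boot all_order all_algebra.
From mathcomp Require Import reals complex.
Set Implicit Arguments. Unset Strict Implicit. Unset Printing Implicit Defensive.
Import GRing.Theory.
Local Open Scope ring_scope.

Definition additive_fun (U V : zmodType) (f : U -> V) : Prop :=
  forall x y, f (x + y) = f x + f y.

Definition is_bimodule (C : fieldType) (A : algType C) (M : zmodType)
  (l : A -> M -> M) (r : M -> A -> M) : Prop :=
  [/\ [/\ (forall a, additive_fun (l a)), (forall m, additive_fun (l^~ m)),
      (forall a, additive_fun (r^~ a)) & (forall m, additive_fun (r m))],
      (forall a b m, l (a * b) m = l a (l b m)) /\ (forall m, l 1 m = m),
      (forall a b m, r m (a * b) = r (r m a) b) /\ (forall m, r m 1 = m),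
      (forall a b m, l a (r m b) = r (l a m) b) &
      (forall (k : C) m, l k%:A m = r m k%:A)].

Definition central_el (A : nzRingType) (M : zmodType)
  (l : A -> M -> M) (r : M -> A -> M) (x : M) : Prop :=
  forall a, l a x = r x a.
Definition centerA (A : nzRingType) (z : A) : Prop := forall a, z * a = a * z.

Definition balanced (A : nzRingType) (M N P : zmodType)
  (rM : M -> A -> M) (lN : A -> N -> N) (phi : M -> N -> P) : Prop :=
  [/\ (forall m, additive_fun (phi m)), (forall n, additive_fun (phi^~ n)) &
      (forall m a n, phi (rM m a) n = phi m (lN a n))].

Definition is_tensor (A : nzRingType) (M N T : zmodType)
  (rM : M -> A -> M) (lN : A -> N -> N) (t : M -> N -> T) : Prop :=
  balanced rM lN t /\
  forall (P : zmodType) (phi : M -> N -> P), balanced rM lN phi ->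
    exists psi : T -> P,
      [/\ additive_fun psi, (forall m n, psi (t m n) = phi m n) &
          (forall psi' : T -> P, additive_fun psi' ->
             (forall m n, psi' (t m n) = phi m n) -> psi' =1 psi)].

(* (T1, t1) is a tensor product Z(E) (x)_{Z(A)} A; t1 is only relevant on
   central first arguments *)
Definition zbalanced (A : nzRingType) (E P : zmodType)
  (lE : A -> E -> E) (rE : E -> A -> E) (phi : E -> A -> P) : Prop :=
  [/\ (forall w, central_el lE rE w -> additive_fun (phi w)),
      (forall w w' a, central_el lE rE w -> central_el lE rE w' ->
          phi (w + w') a = phi w a + phi w' a) &
      (forall w z a, central_el lE rE w -> centerA z ->
          phi (rE w z) a = phi w (z * a))].

Definition is_ztensor (A : nzRingType) (E T1 : zmodType)
  (lE : A -> E -> E) (rE : E -> A -> E) (t1 : E -> A -> T1) : Prop :=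
  zbalanced lE rE t1 /\
  forall (P : zmodType) (phi : E -> A -> P), zbalanced lE rE phi ->
    exists psi : T1 -> P,
      [/\ additive_fun psi,
          (forall w a, central_el lE rE w -> psi (t1 w a) = phi w a) &
          (forall psi' : T1 -> P, additive_fun psi' ->
             (forall w a, central_el lE rE w -> psi' (t1 w a) = phi w a) ->
             psi' =1 psi)].

(* Differential calculus, truncated to degrees 0,1,2 :
   Omega^0 = A, Omega^1 = E, Omega^2 = O2, d0 : A -> E, d1 : E -> O2,
   wedge : E x E -> O2 (balanced, bimodule-compatible) *)
Definition diff_calculus (C : fieldType) (A : algType C)
  (E : zmodType) (lE : A -> E -> E) (rE : E -> A -> E)
  (O2 : zmodType) (lO : A -> O2 -> O2) (rO : O2 -> A -> O2)
  (d0 : A -> E) (d1 : E -> O2) (wedge : E -> E -> O2) : Prop :=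
  [/\ is_bimodule lE rE /\ is_bimodule lO rO,
      [/\ balanced rE lE wedge,
          (forall a x y, wedge (lE a x) y = lO a (wedge x y)) &
          (forall a x y, wedge x (rE y a) = rO (wedge x y) a)],
      [/\ additive_fun d0, (forall (k : C) a, d0 (k *: a) = lE k%:A (d0 a)) &
          (forall a b, d0 (a * b) = rE (d0 a) b + lE a (d0 b))],
      [/\ additive_fun d1, (forall (k : C) e, d1 (lE k%:A e) = lO k%:A (d1 e)),
          (forall a, d1 (d0 a) = 0),
          (forall a e, d1 (lE a e) = wedge (d0 a) e + lO a (d1 e)) &
          (forall a e, d1 (rE e a) = rO (d1 e) a - wedge e (d0 a))] &
      (forall e : E, exists n (u v : 'I_n -> A),
          e = \sum_(i < n) rE (d0 (u i)) (v i)) /\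
      (forall w : O2, exists n (u v c : 'I_n -> A),
          w = \sum_(i < n) rO (wedge (d0 (u i)) (d0 (v i))) (c i))].

(* E is a finitely generated projective right A-module: a direct summand
   of a free module A^n *)
Definition fg_projective (A : nzRingType) (E : zmodType) (rE : E -> A -> E) : Prop :=
  exists n (i : E -> {ffun 'I_n -> A}) (p : {ffun 'I_n -> A} -> E),
    [/\ additive_fun i, (forall e a, i (rE e a) = [ffun k => i e k * a]),
        additive_fun p, (forall (v : {ffun 'I_n -> A}) a, p [ffun k => v k * a] = rE (p v) a) &
        (forall e, p (i e) = e)].

(* A dual frame (b_j, c_j) for g, which exists because E is finitely generated
   projective and g is nondegenerate, gives the Grassmann connection
   e |-> sum_j b_j (x) d g(c_j (x) e); subtracting Q^-1 of its torsion makes it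
   torsion-free.  Since E is spanned by its centre, everything is determined by
   central forms, on which sigma is the flip and all maps are Z(A)-linear.  There,
   as in Riemannian geometry, a torsion-free connection nabla0 is corrected by a
   sigma-symmetric term L, which keeps it torsion-free; compatibility asks that
   the contractions of L absorb the symmetric defect of nabla0, and the Koszul
   formula solves this.  For uniqueness, the difference D of two solutions is
   sigma-symmetric and skew for the metric, so g((g (x) id)(y (x) D x) (x) z) is
   symmetric in (y, z) and antisymmetric in (x, y), hence zero. *)

From mathcomp Require Import all_boot all_order all_algebra.
From mathcomp Require Import reals complex.
From Stdlib Require Import ClassicalEpsilon.
Set Implicit Arguments. Unset Strict Implicit. Unset Printing Implicit Defensive.
Import GRing.Theory Num.Theory.
Local Open Scope ring_scope.

Section AdditiveFun.
Variables U V W : zmodType.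
Implicit Types f h : U -> V.

Lemma additive_fun0 f : additive_fun f -> f 0 = 0.
Proof. by move=> fD; apply: (addrI (f 0)); rewrite -fD !addr0. Qed.

Lemma additive_funN f x : additive_fun f -> f (- x) = - f x.
Proof. by move=> fD; apply: (addrI (f x)); rewrite -fD !subrr additive_fun0. Qed.

Lemma additive_funB f x y : additive_fun f -> f (x - y) = f x - f y.
Proof. by move=> fD; rewrite fD additive_funN. Qed.

Lemma additive_fun_sum f n (G : 'I_n -> U) :
  additive_fun f -> f (\sum_(i < n) G i) = \sum_(i < n) f (G i).
Proof. by move=> fD; rewrite (big_morph f fD (additive_fun0 fD)). Qed.

Lemma additive_fun_comp (f : V -> W) (h : U -> V) :
  additive_fun f -> additive_fun h -> additive_fun (fun x => f (h x)).
Proof. by move=> fD hD x y; rewrite hD fD. Qed.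

Lemma additive_fun_add f h :
  additive_fun f -> additive_fun h -> additive_fun (fun x => f x + h x).
Proof. by move=> fD hD x y; rewrite fD hD addrACA. Qed.

Lemma additive_fun_sub f h :
  additive_fun f -> additive_fun h -> additive_fun (fun x => f x - h x).
Proof. by move=> fD hD x y; rewrite fD hD opprD addrACA. Qed.

Lemma additive_fun_zero : additive_fun (fun _ : U => 0 : V).
Proof. by move=> x y; rewrite addr0. Qed.

Lemma additive_fun_big n (f : 'I_n -> U -> V) :
  (forall i, additive_fun (f i)) -> additive_fun (fun x => \sum_(i < n) f i x).
Proof. by move=> fD x y; rewrite -big_split; apply: eq_bigr => i _; rewrite fD. Qed.

End AdditiveFun.

Lemma tensor_ext (A : nzRingType) (M N T P : zmodType) (rM : M -> A -> M)
    (lN : A -> N -> N) (t : M -> N -> T) (f f' : T -> P) :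
  is_tensor rM lN t -> additive_fun f -> additive_fun f' ->
  (forall m n, f (t m n) = f' (t m n)) -> f =1 f'.
Proof.
move=> [[tDr tDl tbal] tU] fD f'D ff'.
have bal : balanced rM lN (fun m n => f (t m n)).
  by split=> [m | n | m a n]; [exact: additive_fun_comp | exact: additive_fun_comp | rewrite tbal].
have [psi [_ _ psiU]] := tU P _ bal.
by move=> x; rewrite (psiU f) // (psiU f') // => m n; rewrite ff'.
Qed.

Section Halving.
Variables (C : numFieldType) (A : algType C).

Definition half : A := (2^-1 : C)%:A.

Lemma half_double (a : A) : half * (a + a) = a.
Proof.
rewrite -mulr2n mulrnAr -mulrnAl /half scalerMnl -mulr_natr.
by rewrite mulVf ?pnatr_eq0 // scale1r mul1r.
Qed.

Lemma double_eq0 (a : A) : a + a = 0 -> a = 0.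
Proof. by move=> aa0; rewrite -[a]half_double aa0 mulr0. Qed.

Lemma lmod_double_eq0 (M : zmodType) (l : A -> M -> M) :
  (forall a, additive_fun (l a)) -> (forall m, additive_fun (l^~ m)) ->
  (forall m, l 1 m = m) -> forall m : M, m + m = 0 -> m = 0.
Proof.
move=> lD lDl l1 m mm0.
by rewrite -[m]l1 -(half_double 1) mulrDr mulr1 lDl -lD mm0 additive_fun0.
Qed.

End Halving.

Arguments half {C A}.

Lemma sym_antisym_eq0 (X : Type) (V : zmodType) (P : X -> Prop)
    (G : X -> X -> X -> V) :
  (forall v : V, v + v = 0 -> v = 0) ->
  (forall x y z, P x -> P y -> P z -> G x y z = G x z y) ->
  (forall x y z, P x -> P y -> P z -> G x y z = - G y x z) ->
  forall x y z, P x -> P y -> P z -> G x y z = 0.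
Proof.
move=> double0 sym anti x y z Px Py Pz; apply: double0; apply/eqP; rewrite addr_eq0; apply/eqP.
by rewrite {1}anti // sym // anti // opprK sym // anti // sym.
Qed.

Section CentralSpan.
Variables (C : fieldType) (A : algType C) (E T1 : zmodType).
Variables (lE : A -> E -> E) (rE : E -> A -> E) (t1 : E -> A -> T1) (mu : T1 -> E).
Hypothesis HE : is_bimodule lE rE.
Hypothesis Ht1 : is_ztensor lE rE t1.
Hypothesis mu_additive : additive_fun mu.
Hypothesis mu_t1 : forall w a, central_el lE rE w -> mu (t1 w a) = rE w a.
Hypothesis mu_bij : bijective mu.
Local Notation central := (central_el lE rE).

Let mu_inv_additive : exists2 mi : E -> T1, additive_fun mi & cancel mu mi /\ cancel mi mu.
Proof.
case: mu_bij => mi muK miK; exists mi => // x y.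
by apply: (can_inj muK); rewrite mu_additive !miK.
Qed.

Lemma central_span_lift (P : zmodType) (phi : E -> A -> P) :
  zbalanced lE rE phi ->
  exists h : E -> P, additive_fun h /\ forall w a, central w -> h (rE w a) = phi w a.
Proof.
move=> phiZ; have [_ /(_ P phi phiZ) [psi [psiD psi_t1 _]]] := Ht1.
have [mi miD [muK _]] := mu_inv_additive.
exists (fun e => psi (mi e)); split; first exact: additive_fun_comp.
by move=> w a cw; rewrite -mu_t1 // muK psi_t1.
Qed.

Lemma central_span_ext (P : zmodType) (f f' : E -> P) :
  additive_fun f -> additive_fun f' ->
  (forall w a, central w -> f (rE w a) = f' (rE w a)) -> f =1 f'.
Proof.
move=> fD f'D ff'.
have [[_ _ rEDl rEDr] _ [rEA _] _ _] := HE.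
have phiZ : zbalanced lE rE (fun w a => f (rE w a)).
  split=> [w _ | w w' a _ _ | w z a _ _].
  - exact: (additive_fun_comp fD (rEDr w)).
  - by rewrite rEDl fD.
  - by rewrite rEA.
have [_ /(_ P _ phiZ) [psi [_ _ psiU]]] := Ht1.
have [mi _ [_ miK]] := mu_inv_additive.
have agree_psi h : additive_fun h ->
    (forall w a, central w -> h (rE w a) = f (rE w a)) -> forall x, h (mu x) = psi x.
  move=> hD hf; apply: (psiU (fun x => h (mu x))) => [|w a cw].
  - exact: additive_fun_comp.
  - by rewrite mu_t1 ?hf.
move=> e; rewrite -[e]miK (agree_psi f) // (agree_psi f') // => w a cw.
by rewrite ff'.
Qed.

End CentralSpan.

Section LeviCivita.
Variables (R : realType) (A : algType R[i]).
Variables (E : zmodType) (lE : A -> E -> E) (rE : E -> A -> E).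
Variables (O2 : zmodType) (lO : A -> O2 -> O2) (rO : O2 -> A -> O2).
Variables (d0 : A -> E) (d1 : E -> O2) (wedge : E -> E -> O2).
Hypothesis Hcalc : diff_calculus lE rE lO rO d0 d1 wedge.
Hypothesis HEproj : fg_projective rE.
Variables (T : zmodType) (tens : E -> E -> T).
Hypothesis HT : is_tensor rE lE tens.
Variables (lT : A -> T -> T) (rT : T -> A -> T).
Hypothesis HlT : (forall a, additive_fun (lT a)) /\
  forall a x y, lT a (tens x y) = tens (lE a x) y.
Hypothesis HrT : (forall a, additive_fun (rT^~ a)) /\
  forall a x y, rT (tens x y) a = tens x (rE y a).
Variable wedgeT : T -> O2.
Hypothesis HwedgeT : additive_fun wedgeT /\ forall x y, wedgeT (tens x y) = wedge x y.
Variables (T1 : zmodType) (t1 : E -> A -> T1) (mu : T1 -> E).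
Hypothesis HT1 : is_ztensor lE rE t1.
Hypothesis Hmu : additive_fun mu /\
  forall w a, central_el lE rE w -> mu (t1 w a) = rE w a.
Hypothesis H1 : bijective mu.
Variable F : T -> Prop.
Hypothesis HF : [/\ F 0, (forall t t', F t -> F t' -> F (t + t')),
  (forall t, F t -> F (- t)) & (forall t a, F t -> F (rT t a))].
Hypothesis H2sum : (forall t, exists k f, [/\ wedgeT k = 0, F f & t = k + f]) /\
  (forall t, wedgeT t = 0 -> F t -> t = 0).
Hypothesis H2Q : (forall f f', F f -> F f' -> wedgeT f = wedgeT f' -> f = f') /\
  (forall w, exists f, F f /\ wedgeT f = w).
Variable Psym : T -> T.
Hypothesis HPsym : forall t, wedgeT (Psym t) = 0 /\ F (t - Psym t).
Hypothesis H3 : forall w e, central_el lE rE w -> central_el lE rE e ->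
  Psym (tens w e) *+ 2 - tens w e = tens e w.
Variable g : T -> A.
Hypothesis Hg : [/\ additive_fun g, (forall a t, g (lT a t) = a * g t),
  (forall a t, g (rT t a) = g t * a),
  (forall t, g (Psym t *+ 2 - t) = g t) &
  (forall e, (forall f, g (tens e f) = 0) -> e = 0) /\
  (forall phi : E -> A, additive_fun phi ->
     (forall f b, phi (rE f b) = phi f * b) ->
     exists e, forall f, g (tens e f) = phi f)].
Variables (T3 : zmodType) (tens3 : E -> T -> T3).
Hypothesis HT3 : is_tensor rE lT tens3.
Variable rtens : T -> E -> T3.
Hypothesis Hrtens : (forall e, additive_fun (rtens^~ e)) /\
  forall x y e, rtens (tens x y) e = tens3 x (tens y e).
Variable sigma23 : T3 -> T3.
Hypothesis Hsigma23 : additive_fun sigma23 /\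
  forall x t, sigma23 (tens3 x t) = tens3 x (Psym t *+ 2 - t).
Variable gid : T3 -> E.
Hypothesis Hgid : additive_fun gid /\
  forall x y z, gid (tens3 x (tens y z)) = lE (g (tens x y)) z.

Local Notation central := (central_el lE rE).

Let HE : is_bimodule lE rE. Proof. by case: Hcalc => [[]]. Qed.
Let lED a : additive_fun (lE a). Proof. by case: HE => [[]]. Qed.
Let lEDl m : additive_fun (lE^~ m). Proof. by case: HE => [[]]. Qed.
Let rED a : additive_fun (rE^~ a). Proof. by case: HE => [[]]. Qed.
Let rEDr m : additive_fun (rE m). Proof. by case: HE => [[]]. Qed.
Let lEA a b m : lE (a * b) m = lE a (lE b m). Proof. by case: HE => _ []. Qed.
Let lE1 m : lE 1 m = m. Proof. by case: HE => _ []. Qed.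
Let rEA m a b : rE m (a * b) = rE (rE m a) b. Proof. by case: HE => _ _ []. Qed.
Let rE1 m : rE m 1 = m. Proof. by case: HE => _ _ []. Qed.
Let lrEA a m b : lE a (rE m b) = rE (lE a m) b. Proof. by case: HE. Qed.
Let lOD a : additive_fun (lO a). Proof. by case: Hcalc => [[_ [[]]]]. Qed.
Let lODl m : additive_fun (lO^~ m). Proof. by case: Hcalc => [[_ [[]]]]. Qed.
Let rOD a : additive_fun (rO^~ a). Proof. by case: Hcalc => [[_ [[]]]]. Qed.
Let lO1 m : lO 1 m = m. Proof. by case: Hcalc => [[_ [_ []]]]. Qed.
Let wedge_rE x y a : wedge x (rE y a) = rO (wedge x y) a.
Proof. by case: Hcalc => _ []. Qed.
Let d0D : additive_fun d0. Proof. by case: Hcalc => _ _ []. Qed.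
Let d0Z (k : R[i]) a : d0 (k *: a) = lE k%:A (d0 a). Proof. by case: Hcalc => _ _ []. Qed.
Let d0M a b : d0 (a * b) = rE (d0 a) b + lE a (d0 b). Proof. by case: Hcalc => _ _ []. Qed.
Let d1D : additive_fun d1. Proof. by case: Hcalc => _ _ _ []. Qed.
Let d1_rE a e : d1 (rE e a) = rO (d1 e) a - wedge e (d0 a).
Proof. by case: Hcalc => _ _ _ []. Qed.

Let tensDr m : additive_fun (tens m). Proof. by case: HT => [[]]. Qed.
Let tensDl n : additive_fun (tens^~ n). Proof. by case: HT => [[]]. Qed.
Let tens_balanced m a n : tens (rE m a) n = tens m (lE a n). Proof. by case: HT => [[]]. Qed.
Let tens3Dr m : additive_fun (tens3 m). Proof. by case: HT3 => [[]]. Qed.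
Let tens3Dl n : additive_fun (tens3^~ n). Proof. by case: HT3 => [[]]. Qed.
Let tens3_balanced m a n : tens3 (rE m a) n = tens3 m (lT a n).
Proof. by case: HT3 => [[]]. Qed.
Let lTD a : additive_fun (lT a). Proof. by case: HlT. Qed.
Let lT_tens a x y : lT a (tens x y) = tens (lE a x) y. Proof. by case: HlT. Qed.
Let rTD a : additive_fun (rT^~ a). Proof. by case: HrT. Qed.
Let rT_tens a x y : rT (tens x y) a = tens x (rE y a). Proof. by case: HrT. Qed.
Let wedgeTD : additive_fun wedgeT. Proof. by case: HwedgeT. Qed.
Let wedgeT_tens x y : wedgeT (tens x y) = wedge x y. Proof. by case: HwedgeT. Qed.
Let gD : additive_fun g. Proof. by case: Hg. Qed.
Let g_lT a t : g (lT a t) = a * g t. Proof. by case: Hg. Qed.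
Let g_rT a t : g (rT t a) = g t * a. Proof. by case: Hg. Qed.
Let g_sym t : g (Psym t *+ 2 - t) = g t. Proof. by case: Hg. Qed.
Let g_nondeg e : (forall f, g (tens e f) = 0) -> e = 0.
Proof. by case: Hg => _ _ _ _ [nondeg _]; apply: nondeg. Qed.
Let g_surj (phi : E -> A) : additive_fun phi -> (forall f b, phi (rE f b) = phi f * b) ->
  exists e, forall f, g (tens e f) = phi f.
Proof. by case: Hg => _ _ _ _ [_ surj]; apply: surj. Qed.
Let rtensDl e : additive_fun (rtens^~ e). Proof. by case: Hrtens. Qed.
Let rtens_tens x y e : rtens (tens x y) e = tens3 x (tens y e). Proof. by case: Hrtens. Qed.
Let sigma23D : additive_fun sigma23. Proof. by case: Hsigma23. Qed.
Let gidD : additive_fun gid. Proof. by case: Hgid. Qed.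
Let gid_tens x y z : gid (tens3 x (tens y z)) = lE (g (tens x y)) z. Proof. by case: Hgid. Qed.

Let tens_ext (P : zmodType) (f f' : T -> P) : additive_fun f -> additive_fun f' ->
  (forall x y, f (tens x y) = f' (tens x y)) -> f =1 f'.
Proof. exact: (tensor_ext HT). Qed.
Let central_ext (P : zmodType) (f f' : E -> P) : additive_fun f -> additive_fun f' ->
  (forall w a, central w -> f (rE w a) = f' (rE w a)) -> f =1 f'.
Proof. exact: (central_span_ext HE HT1 Hmu.1 Hmu.2 H1). Qed.
Let central_lift (P : zmodType) (phi : E -> A -> P) : zbalanced lE rE phi ->
  exists h : E -> P, additive_fun h /\ forall w a, central w -> h (rE w a) = phi w a.
Proof. exact: (central_span_lift HT1 Hmu.1 Hmu.2 H1). Qed.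

Lemma rTDr t : additive_fun (rT t).
Proof.
move=> a b; move: t; apply: tens_ext.
- exact: rTD.
- exact: (additive_fun_add (rTD a) (rTD b)).
- by move=> x y; rewrite !rT_tens rEDr tensDr.
Qed.

Lemma rTA t a b : rT t (a * b) = rT (rT t a) b.
Proof.
move: t; apply: tens_ext.
- exact: rTD.
- exact: (additive_fun_comp (rTD b) (rTD a)).
- by move=> x y; rewrite !rT_tens rEA.
Qed.

Lemma rT1 t : rT t 1 = t.
Proof. by move: t; apply: tens_ext => // x y; rewrite rT_tens rE1. Qed.

Lemma wedgeT_rT t a : wedgeT (rT t a) = rO (wedgeT t) a.
Proof.
move: t; apply: tens_ext.
- exact: (additive_fun_comp wedgeTD (rTD a)).
- exact: (additive_fun_comp (rOD a) wedgeTD).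
- by move=> x y; rewrite rT_tens !wedgeT_tens wedge_rE.
Qed.

Lemma centralD w w' : central w -> central w' -> central (w + w').
Proof. by move=> cw cw' a; rewrite lED rED cw cw'. Qed.

Lemma central_rE w z : central w -> centerA z -> central (rE w z).
Proof. by move=> cw cz a; rewrite lrEA cw -!rEA cz. Qed.

Lemma lE_centerA z x : centerA z -> lE z x = rE x z.
Proof.
move=> cz; move: x; apply: central_ext => // w a cw.
by rewrite lrEA cw -!rEA cz.
Qed.

Lemma g_tens_rE x y a : g (tens x (rE y a)) = g (tens x y) * a.
Proof. by rewrite -rT_tens g_rT. Qed.

Lemma g_tens_lE x y a : g (tens (lE a x) y) = a * g (tens x y).
Proof. by rewrite -lT_tens g_lT. Qed.

Lemma g_tens_rE_centerA x y c : centerA c -> g (tens (rE x c) y) = g (tens x y) * c.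
Proof. by move=> cc; rewrite tens_balanced lE_centerA // g_tens_rE. Qed.

Lemma F_sub t t' : F t -> F t' -> F (t - t').
Proof. by case: HF => _ FD FN _ Ft Ft'; apply: FD => //; apply: FN. Qed.

Lemma F_rT t a : F t -> F (rT t a).
Proof. by case: HF => _ _ _; apply. Qed.

Lemma Psym_unique t k : wedgeT k = 0 -> F (t - k) -> Psym t = k.
Proof.
move=> wk Fk; have [wP FP] := HPsym t.
apply/eqP; rewrite -subr_eq0; apply/eqP; apply: H2sum.2.
  by rewrite additive_funB // wP wk subrr.
have -> : Psym t - k = (t - k) - (t - Psym t) by rewrite opprB [RHS]addrC addrA subrK.
exact: F_sub.
Qed.

Lemma PsymD : additive_fun Psym.
Proof.
move=> t t'; apply: Psym_unique; first by rewrite wedgeTD !(HPsym _).1 addr0.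
by rewrite opprD addrACA; case: HF => _ FD _ _; apply: FD; apply: (HPsym _).2.
Qed.

Lemma Psym_rT t a : Psym (rT t a) = rT (Psym t) a.
Proof.
apply: Psym_unique; first by rewrite wedgeT_rT (HPsym t).1 (additive_fun0 (rOD a)).
by rewrite -(additive_funB _ _ (rTD a)); apply/F_rT/(HPsym t).2.
Qed.

Definition sigma t := Psym t *+ 2 - t.

Lemma sigmaD : additive_fun sigma.
Proof. by move=> t t'; rewrite /sigma PsymD mulrnDl opprD addrACA. Qed.

Lemma sigma_rT t a : sigma (rT t a) = rT (sigma t) a.
Proof. by rewrite /sigma Psym_rT (additive_funB _ _ (rTD a)) mulr2n (rTD a). Qed.

Lemma sigma_tens_central y e : central e -> sigma (tens y e) = tens e y.
Proof.
move=> ce; move: y; apply: central_ext.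
- exact: (additive_fun_comp sigmaD (tensDl e)).
- exact: tensDr.
- by move=> w a cw; rewrite tens_balanced ce -rT_tens sigma_rT [sigma _]H3 // rT_tens.
Qed.

Lemma sigma_ker_wedge t : wedgeT t = 0 -> sigma t = t.
Proof.
move=> wt; rewrite /sigma (@Psym_unique t t) // ?mulr2n ?addrK // subrr.
by case: HF.
Qed.

Lemma wedgeT_sigma_fixed t : sigma t = t -> wedgeT t = 0.
Proof.
move=> st; apply: (lmod_double_eq0 lOD lODl lO1).
rewrite -{1}st /sigma additive_funB // mulr2n wedgeTD (HPsym t).1 addr0 sub0r.
exact: addNr.
Qed.

Lemma g_tens_sym y e : central e -> g (tens y e) = g (tens e y).
Proof. by move=> ce; rewrite -g_sym -/(sigma _) sigma_tens_central. Qed.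

Lemma g_tens_centerA w e : central w -> central e -> centerA (g (tens w e)).
Proof.
move=> cw ce a.
by rewrite -g_rT -g_lT lT_tens rT_tens cw tens_balanced ce.
Qed.

Lemma g_tens_central_inj x x' :
  (forall z, central z -> g (tens x z) = g (tens x' z)) -> x = x'.
Proof.
move=> xx'; apply/eqP; rewrite -subr_eq0; apply/eqP; apply: g_nondeg.
apply: central_ext.
- exact: (additive_fun_comp gD (tensDr _)).
- exact: additive_fun_zero.
- move=> z a cz; rewrite g_tens_rE (additive_funB _ _ (tensDl z)) (additive_funB _ _ gD).
  by rewrite xx' // subrr mul0r.
Qed.

Lemma tensor_central_ext (P : zmodType) (f f' : T -> P) :
  additive_fun f -> additive_fun f' ->
  (forall w w' a, central w -> central w' ->
     f (rT (tens w w') a) = f' (rT (tens w w') a)) -> f =1 f'.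
Proof.
move=> fD f'D ff'.
have f_tens_central w y : central w -> f (tens w y) = f' (tens w y).
  move=> cw; move: y; apply: central_ext.
  - exact: (additive_fun_comp fD (tensDr w)).
  - exact: (additive_fun_comp f'D (tensDr w)).
  - by move=> w' a cw'; rewrite -rT_tens ff'.
apply: tens_ext => // x y; move: x; apply: central_ext.
- exact: (additive_fun_comp fD (tensDl y)).
- exact: (additive_fun_comp f'D (tensDl y)).
- by move=> w a cw; rewrite tens_balanced f_tens_central.
Qed.

Definition contr y t := gid (tens3 y t).

Lemma contrDr y : additive_fun (contr y).
Proof. exact: (additive_fun_comp gidD (tens3Dr y)). Qed.

Lemma contrDl t : additive_fun (contr^~ t).
Proof. exact: (additive_fun_comp gidD (tens3Dl t)). Qed.

Lemma contr_tens y u v : contr y (tens u v) = lE (g (tens y u)) v.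
Proof. exact: gid_tens. Qed.

Lemma contr_rE y a t : contr (rE y a) t = contr y (lT a t).
Proof. by rewrite /contr tens3_balanced. Qed.

Lemma contr_rT y t a : contr y (rT t a) = rE (contr y t) a.
Proof.
move: t; apply: tens_ext.
- exact: (additive_fun_comp (contrDr y) (rTD a)).
- exact: (additive_fun_comp (rED a) (contrDr y)).
- by move=> u v; rewrite rT_tens !contr_tens lrEA.
Qed.

Lemma contr_lT y t a : central y -> contr y (lT a t) = lE a (contr y t).
Proof.
move=> cy; move: t; apply: tens_ext.
- exact: (additive_fun_comp (contrDr y) (lTD a)).
- exact: (additive_fun_comp (lED a) (contrDr y)).
- by move=> u v; rewrite lT_tens !contr_tens -tens_balanced -cy g_tens_lE lEA.
Qed.

Lemma gid_sigma23_rtens t e : central e -> gid (sigma23 (rtens t e)) = contr e t.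
Proof.
move=> ce; move: t; apply: tens_ext.
- exact: (additive_fun_comp gidD (additive_fun_comp sigma23D (rtensDl e))).
- exact: contrDr.
- move=> u v; rewrite rtens_tens Hsigma23.2 -/(sigma _) sigma_tens_central //.
  by rewrite gid_tens contr_tens g_tens_sym.
Qed.

Lemma contr_sigma_swap y z t : central y -> central z ->
  g (tens (contr y (sigma t)) z) = g (tens (contr z t) y).
Proof.
move=> cy cz; move: t; apply: tensor_central_ext.
- exact: (additive_fun_comp gD (additive_fun_comp (tensDl z)
                               (additive_fun_comp (contrDr y) sigmaD))).
- exact: (additive_fun_comp gD (additive_fun_comp (tensDl y) (contrDr z))).
- move=> w w' a cw cw'.
  rewrite sigma_rT sigma_tens_central // !contr_rT !contr_tens !tens_balanced.
  rewrite !g_tens_lE cz cy !g_tens_rE (g_tens_sym y cw') (g_tens_sym w cz) !mulrA.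
  by rewrite (g_tens_centerA cz cw).
Qed.

Lemma dual_frame : exists n (b c : 'I_n -> E),
  (forall f, f = \sum_(j < n) rE (b j) (g (tens (c j) f))) /\
  (forall y, y = \sum_(j < n) lE (g (tens y (b j))) (c j)).
Proof.
have [n [i [p [iD i_rE pD p_rE pi]]]] := HEproj.
have /fin_all_exists [c g_c] : forall j : 'I_n, exists e, forall f, g (tens e f) = i f j.
  move=> j; apply: g_surj => [x y | f b]; first by rewrite iD !ffunE.
  by rewrite i_rE ffunE.
pose delta (j : 'I_n) : {ffun 'I_n -> A} := [ffun k => (k == j)%:R].
have right_frame f : f = \sum_(j < n) rE (p (delta j)) (g (tens (c j) f)).
  have -> : \sum_(j < n) rE (p (delta j)) (g (tens (c j) f)) =
            p (\sum_(j < n) [ffun k => delta j k * i f j]).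
    by rewrite (additive_fun_sum _ pD); apply: eq_bigr => j _; rewrite p_rE g_c.
  have -> : \sum_(j < n) [ffun k => delta j k * i f j] = i f.
    apply/ffunP => k; rewrite sum_ffunE (bigD1 k) //= !ffunE eqxx mul1r big1 ?addr0 //.
    by move=> j /negPf nj; rewrite !ffunE eq_sym nj mul0r.
  by rewrite pi.
exists n, (fun j => p (delta j)), c; split=> // y.
apply/eqP; rewrite -subr_eq0; apply/eqP; apply: g_nondeg => f.
rewrite (additive_funB _ _ (tensDl f)) (additive_funB _ _ gD).
rewrite (additive_fun_sum _ (additive_fun_comp gD (tensDl f))).
under eq_bigr => j _ do rewrite /= g_tens_lE -g_tens_rE.
by rewrite -(additive_fun_sum _ (additive_fun_comp gD (tensDr y))) -right_frame subrr.
Qed.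

Lemma contr_nondeg t : (forall y, central y -> contr y t = 0) -> t = 0.
Proof.
move=> t0; have [n [b [c [bc _]]]] := dual_frame.
have expand s : s = \sum_(j < n) tens (b j) (contr (c j) s).
  move: s; apply: tens_ext => //.
  - exact: (additive_fun_big (fun j => additive_fun_comp (tensDr (b j)) (contrDr (c j)))).
  - move=> u v; under eq_bigr => j _ do rewrite contr_tens -tens_balanced.
    by rewrite -(additive_fun_sum _ (tensDl v)) -bc.
have {}t0 x : contr x t = 0.
  move: x; apply: central_ext; [exact: contrDl | exact: additive_fun_zero |].
  by move=> w a cw; rewrite contr_rE contr_lT // t0 // (additive_fun0 (lED a)).
by rewrite (expand t) big1 // => j _; rewrite t0 (additive_fun0 (tensDr _)).
Qed.

Lemma contr_inj t t' : (forall y, central y -> contr y t = contr y t') -> t = t'.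
Proof.
move=> tt'; apply/eqP; rewrite -subr_eq0; apply/eqP; apply: contr_nondeg => y cy.
by rewrite (additive_funB _ _ (contrDr y)) tt' // subrr.
Qed.

Definition zlinear (M : zmodType) (rM : M -> A -> M) (f : E -> M) :=
  (forall z z', central z -> central z' -> f (z + z') = f z + f z') /\
  (forall z c, central z -> centerA c -> f (rE z c) = rM (f z) c).

Definition riesz (phi : E -> A) : E :=
  epsilon (inhabits 0) (fun e => forall z, central z -> g (tens e z) = phi z).

Lemma rieszP phi : zlinear *%R phi ->
  forall z, central z -> g (tens (riesz phi) z) = phi z.
Proof.
move=> [phiD phiZ].
apply: (epsilon_spec (inhabits 0) (fun e => forall z, central z -> g (tens e z) = phi z)).
have [h [hD h_rE]] : exists h : E -> A,
    additive_fun h /\ forall w a, central w -> h (rE w a) = phi w * a.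
  apply: (central_lift (phi := fun z a => phi z * a)).
  split=> [z _ a b | z z' a cz cz' | z c a cz cc].
  - by rewrite mulrDr.
  - by rewrite phiD // mulrDl.
  - by rewrite phiZ // mulrA.
have h_rEr f b : h (rE f b) = h f * b.
  move: f; apply: central_ext.
  - exact: (additive_fun_comp hD (rED b)).
  - by move=> u v; rewrite hD mulrDl.
  - by move=> w a cw; rewrite -rEA !h_rE // mulrA.
have [e g_e] := g_surj hD h_rEr.
by exists e => z cz; rewrite g_e -{1}[z]rE1 h_rE // mulr1.
Qed.

Definition contr_inv (th : E -> E) : T :=
  epsilon (inhabits 0) (fun t => forall y, central y -> contr y t = th y).

Lemma contr_invP th : zlinear rE th ->
  forall y, central y -> contr y (contr_inv th) = th y.
Proof.
move=> [thD thZ].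
apply: (epsilon_spec (inhabits 0) (fun t => forall y, central y -> contr y t = th y)).
have [h [hD h_rE]] : exists h : E -> E,
    additive_fun h /\ forall w a, central w -> h (rE w a) = lE a (th w).
  apply: (central_lift (phi := fun w a => lE a (th w))).
  split=> [w _ | w w' a cw cw' | w z a cw cz].
  - exact: lEDl.
  - by rewrite thD // lED.
  - by rewrite thZ // -lE_centerA // -lEA cz.
have h_lE b x : h (lE b x) = lE b (h x).
  move: x; apply: central_ext.
  - exact: (additive_fun_comp hD (lED b)).
  - exact: (additive_fun_comp (lED b) hD).
  - by move=> w a cw; rewrite lrEA cw -rEA !h_rE // lEA.
have [n [b [c [_ bc]]]] := dual_frame.
exists (\sum_(j < n) tens (b j) (h (c j))) => y cy.
rewrite (additive_fun_sum _ (contrDr y)).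
under eq_bigr => j _ do rewrite contr_tens -h_lE.
by rewrite -(additive_fun_sum _ hD) -bc -{1}[y]rE1 h_rE // lE1.
Qed.

Definition connection (nab : E -> T) :=
  [/\ additive_fun nab,
      forall (k : R[i]) e, nab (rE e k%:A) = rT (nab e) k%:A &
      forall e a, nab (rE e a) = rT (nab e) a + tens e (d0 a)].

Definition torsionfree (nab : E -> T) := forall e, wedgeT (nab e) + d1 e = 0.

Definition compatible (nab : E -> T) := forall w e, central w -> central e ->
  gid (sigma23 (rtens (nab w) e) + tens3 w (nab e)) = d0 (g (tens w e)).

Lemma compatibleE nab : compatible nab <-> forall w e, central w -> central e ->
  contr e (nab w) + contr w (nab e) = d0 (g (tens w e)).
Proof.
by split=> comp w e cw ce; rewrite -comp // gidD gid_sigma23_rtens.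
Qed.

Lemma d0_scalar (k : R[i]) : d0 k%:A = 0.
Proof.
have d0_1 : d0 1 = 0.
  have := d0M 1 1; rewrite mulr1 rE1 lE1 => d0_11.
  by apply: (addrI (d0 1)); rewrite addr0 -d0_11.
by rewrite d0Z d0_1 (additive_fun0 (lED _)).
Qed.

Lemma connection_leibniz nab : additive_fun nab ->
  (forall e a, nab (rE e a) = rT (nab e) a + tens e (d0 a)) -> connection nab.
Proof.
move=> nabD nab_rE; split=> // k e.
by rewrite nab_rE d0_scalar (additive_fun0 (tensDr e)) addr0.
Qed.

Lemma connection_exists : exists nab, connection nab.
Proof.
have [n [b [c [bc _]]]] := dual_frame.
exists (fun e => \sum_(j < n) tens (b j) (d0 (g (tens (c j) e)))).
apply: connection_leibniz.
  apply: additive_fun_big => j.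
  exact: (additive_fun_comp (tensDr _) (additive_fun_comp d0D (additive_fun_comp gD (tensDr _)))).
move=> e a; rewrite (additive_fun_sum _ (rTD a)) {3}(bc e).
rewrite (additive_fun_sum _ (tensDl _)) -big_split; apply: eq_bigr => j _.
by rewrite g_tens_rE d0M tensDr rT_tens tens_balanced.
Qed.

Definition Qinv w := epsilon (inhabits 0) (fun f => F f /\ wedgeT f = w).

Lemma QinvP w : F (Qinv w) /\ wedgeT (Qinv w) = w.
Proof. exact: (epsilon_spec (inhabits 0) (fun f => F f /\ wedgeT f = w) (H2Q.2 w)). Qed.

Lemma QinvD : additive_fun Qinv.
Proof.
move=> w w'; apply: H2Q.1; first exact: (QinvP _).1.
  by case: HF => _ FD _ _; apply: FD; apply: (QinvP _).1.
by rewrite wedgeTD !(QinvP _).2.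
Qed.

Lemma Qinv_rO w a : Qinv (rO w a) = rT (Qinv w) a.
Proof.
apply: H2Q.1; [exact: (QinvP _).1 | exact/F_rT/(QinvP _).1 |].
by rewrite wedgeT_rT !(QinvP _).2.
Qed.

Lemma torsionfree_connection_exists : exists nab, connection nab /\ torsionfree nab.
Proof.
have [nab [nabD _ nab_rE]] := connection_exists.
pose tor e := wedgeT (nab e) + d1 e.
have torD : additive_fun tor := additive_fun_add (additive_fun_comp wedgeTD nabD) d1D.
have tor_rE e a : tor (rE e a) = rO (tor e) a.
  rewrite /tor nab_rE wedgeTD wedgeT_rT wedgeT_tens d1_rE (rOD a).
  by rewrite addrACA subrr addr0.
exists (fun e => nab e - Qinv (tor e)); split.
  apply: connection_leibniz => [|e a].
    exact: (additive_fun_sub nabD (additive_fun_comp QinvD torD)).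
  by rewrite nab_rE tor_rE Qinv_rO (additive_funB _ _ (rTD a)) addrAC.
move=> e; rewrite (additive_funB _ _ wedgeTD) (QinvP _).2 /tor.
  by rewrite opprD addrA subrr add0r addNr.
Qed.

Lemma zlinearD (f h : E -> A) :
  zlinear *%R f -> zlinear *%R h -> zlinear *%R (fun x => f x + h x).
Proof.
move=> [fD fZ] [hD hZ]; split=> [z z' cz cz' | z c cz cc].
  by rewrite fD // hD // addrACA.
by rewrite fZ // hZ // mulrDl.
Qed.

Lemma zlinearB (f h : E -> A) :
  zlinear *%R f -> zlinear *%R h -> zlinear *%R (fun x => f x - h x).
Proof.
move=> [fD fZ] [hD hZ]; split=> [z z' cz cz' | z c cz cc].
  by rewrite fD // hD // opprD addrACA.
by rewrite fZ // hZ // mulrBl.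
Qed.

Lemma zlinear_half (f : E -> A) : zlinear *%R f -> zlinear *%R (fun x => half * f x).
Proof.
move=> [fD fZ]; split=> [z z' cz cz' | z c cz cc]; first by rewrite fD // mulrDr.
by rewrite fZ // mulrA.
Qed.

Lemma zlinear_g_tensl (h : E -> E) z :
  zlinear rE h -> zlinear *%R (fun x => g (tens (h x) z)).
Proof.
move=> [hD hZ]; split=> [x x' cx cx' | x c cx cc]; first by rewrite hD // tensDl gD.
by rewrite hZ // g_tens_rE_centerA.
Qed.

Lemma zlinear_g_tensr y : zlinear *%R (fun z => g (tens y z)).
Proof. by split=> [z z' _ _ | z c _ _]; rewrite ?tensDr ?gD ?g_tens_rE. Qed.

Section KoszulCorrection.
Variable nab0 : E -> T.
Hypothesis nab0_conn : connection nab0.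
Hypothesis nab0_tf : torsionfree nab0.

Definition defect x y := d0 (g (tens x y)) - contr y (nab0 x) - contr x (nab0 y).

Lemma defect_sym x y : central x -> central y -> defect x y = defect y x.
Proof. by move=> cx cy; rewrite /defect (g_tens_sym x cy) addrAC. Qed.

Lemma defect_zlinear x : central x -> zlinear rE (defect x).
Proof.
have [nab0D _ nab0_rE] := nab0_conn.
move=> cx; split=> [y y' cy cy' | y c cy cc].
  rewrite /defect tensDr gD d0D (contrDl (nab0 x)) nab0D (contrDr x).
  by rewrite !opprD (addrACA (d0 _)) (addrACA (d0 _ - _)).
rewrite /defect contr_rE contr_lT // lE_centerA // g_tens_rE d0M nab0_rE.
rewrite (contrDr x) contr_rT contr_tens !(additive_funB _ _ (rED c)).
by rewrite addrAC (addrC (rE (contr x _) c)) addrKA addrAC.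
Qed.

Lemma defect_zlinearl y : central y -> zlinear rE (defect^~ y).
Proof.
move=> cy; have [dD dZ] := defect_zlinear cy.
split=> [x x' cx cx' | x c cx cc].
  by rewrite (defect_sym (centralD cx cx') cy) dD // (defect_sym cx cy) (defect_sym cx' cy).
by rewrite (defect_sym (central_rE cx cc) cy) dZ // (defect_sym cx cy).
Qed.

(* The Koszul formula: the unique solution, symmetric in y and z, of
   koszul x y z + koszul y x z = g (defect x y (x) z). *)
Definition koszul x y z :=
  half * (g (tens (defect x y) z) + g (tens (defect x z) y) - g (tens (defect y z) x)).

Lemma koszul_sym23 x y z : central y -> central z -> koszul x y z = koszul x z y.
Proof.
by move=> cy cz; rewrite /koszul (defect_sym cy cz) (addrC (g (tens (defect x y) z))).
Qed.

Lemma koszul_add_swap x y z : central x -> central y ->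
  koszul x y z + koszul y x z = g (tens (defect x y) z).
Proof.
move=> cx cy; rewrite /koszul -mulrDr (defect_sym cy cx).
by rewrite addrACA (addrACA (g _)) -opprD (addrC (g (tens (defect y z) x))) addrK half_double.
Qed.

Lemma koszul_zlinear1 y z : central y -> central z -> zlinear *%R (fun x => koszul x y z).
Proof.
move=> cy cz; apply: zlinear_half; apply: zlinearB; first apply: zlinearD.
- exact: zlinear_g_tensl (defect_zlinearl cy).
- exact: zlinear_g_tensl (defect_zlinearl cz).
- exact: zlinear_g_tensr.
Qed.

Lemma koszul_zlinear2 x z : central x -> central z -> zlinear *%R (fun y => koszul x y z).
Proof.
move=> cx cz; apply: zlinear_half; apply: zlinearB; first apply: zlinearD.
- exact: zlinear_g_tensl (defect_zlinear cx).
- exact: zlinear_g_tensr.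
- exact: zlinear_g_tensl (defect_zlinearl cz).
Qed.

Lemma koszul_zlinear3 x y : central x -> central y -> zlinear *%R (koszul x y).
Proof.
move=> cx cy; apply: zlinear_half; apply: zlinearB; first apply: zlinearD.
- exact: zlinear_g_tensr.
- exact: zlinear_g_tensl (defect_zlinear cx).
- exact: zlinear_g_tensl (defect_zlinear cy).
Qed.

Definition koszul_vec x y := riesz (koszul x y).

Lemma koszul_vecP x y : central x -> central y ->
  forall z, central z -> g (tens (koszul_vec x y) z) = koszul x y z.
Proof. by move=> cx cy; apply/rieszP/koszul_zlinear3. Qed.

Lemma koszul_vec_zlinear1 y : central y -> zlinear rE (fun x => koszul_vec x y).
Proof.
move=> cy; split=> [x x' cx cx' | x c cx cc]; apply: g_tens_central_inj => z cz.
  have cxx' := centralD cx cx'.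
  by rewrite tensDl gD !koszul_vecP // (koszul_zlinear1 cy cz).1.
have cxc := central_rE cx cc.
by rewrite g_tens_rE_centerA // !koszul_vecP // (koszul_zlinear1 cy cz).2.
Qed.

Lemma koszul_vec_zlinear2 x : central x -> zlinear rE (koszul_vec x).
Proof.
move=> cx; split=> [y y' cy cy' | y c cy cc]; apply: g_tens_central_inj => z cz.
  have cyy' := centralD cy cy'.
  by rewrite tensDl gD !koszul_vecP // (koszul_zlinear2 cx cz).1.
have cyc := central_rE cy cc.
by rewrite g_tens_rE_centerA // !koszul_vecP // (koszul_zlinear2 cx cz).2.
Qed.

Lemma koszul_vec_add_swap x y : central x -> central y ->
  koszul_vec x y + koszul_vec y x = defect x y.
Proof.
move=> cx cy; apply: g_tens_central_inj => z cz.
by rewrite tensDl gD !koszul_vecP // koszul_add_swap.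
Qed.

Definition koszul_tensor x := contr_inv (koszul_vec x).

Lemma koszul_tensorP x : central x ->
  forall y, central y -> contr y (koszul_tensor x) = koszul_vec x y.
Proof. by move=> cx; apply/contr_invP/koszul_vec_zlinear2. Qed.

Lemma koszul_tensor_zlinear : zlinear rT koszul_tensor.
Proof.
split=> [x x' cx cx' | x c cx cc]; apply: contr_inj => y cy.
  have cxx' := centralD cx cx'.
  by rewrite (contrDr y) !koszul_tensorP // (koszul_vec_zlinear1 cy).1.
have cxc := central_rE cx cc.
by rewrite contr_rT !koszul_tensorP // (koszul_vec_zlinear1 cy).2.
Qed.

Lemma sigma_koszul_tensor x : central x -> sigma (koszul_tensor x) = koszul_tensor x.
Proof.
move=> cx; apply: contr_inj => y cy; apply: g_tens_central_inj => z cz.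
by rewrite contr_sigma_swap // !koszul_tensorP // !koszul_vecP // koszul_sym23.
Qed.

Lemma correction_exists : exists L : E -> T, [/\ additive_fun L,
  forall e a, L (rE e a) = rT (L e) a,
  forall w, central w -> L w = koszul_tensor w & forall e, wedgeT (L e) = 0].
Proof.
have [ktD ktZ] := koszul_tensor_zlinear.
have [L [LD L_rE]] : exists L : E -> T,
    additive_fun L /\ forall w a, central w -> L (rE w a) = rT (koszul_tensor w) a.
  apply: (central_lift (phi := fun w a => rT (koszul_tensor w) a)).
  split=> [w _ | w w' a cw cw' | w c a cw cc].
  - exact: rTDr.
  - by rewrite ktD // rTD.
  - by rewrite ktZ // rTA.
exists L; split=> // [e b | w cw | e].
- move: e; apply: central_ext.
  + exact: (additive_fun_comp LD (rED b)).
  + exact: (additive_fun_comp (rTD b) LD).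
  + by move=> w a cw; rewrite -rEA !L_rE // rTA.
- by rewrite -{1}[w]rE1 L_rE // rT1.
- move: e; apply: (central_ext (f' := fun=> 0)).
  + exact: (additive_fun_comp wedgeTD LD).
  + exact: additive_fun_zero.
  + move=> w a cw; rewrite L_rE // wedgeT_rT wedgeT_sigma_fixed ?sigma_koszul_tensor //.
    exact: (additive_fun0 (rOD a)).
Qed.

Lemma koszul_correction : exists nab, [/\ connection nab, torsionfree nab & compatible nab].
Proof.
have [nab0D _ nab0_rE] := nab0_conn.
have [L [LD L_rE L_central L_wedge]] := correction_exists.
exists (fun e => nab0 e + L e); split.
- apply: connection_leibniz => [|e a]; first exact: additive_fun_add.
  by rewrite nab0_rE L_rE rTD addrAC.
- by move=> e; rewrite wedgeTD L_wedge addr0 nab0_tf.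
- apply/compatibleE => w e cw ce; rewrite !contrDr !L_central // !koszul_tensorP //.
  rewrite addrACA koszul_vec_add_swap // /defect.
  by rewrite addrC (addrC (contr e _)) subrKA subrK.
Qed.

End KoszulCorrection.

Lemma levi_civita_exists : exists nab, [/\ connection nab, torsionfree nab & compatible nab].
Proof.
have [nab0 [nab0_conn nab0_tf]] := torsionfree_connection_exists.
exact: koszul_correction nab0_conn nab0_tf.
Qed.

Lemma symmetric_skew_vanish (D : E -> T) : additive_fun D ->
  (forall e a, D (rE e a) = rT (D e) a) -> (forall e, wedgeT (D e) = 0) ->
  (forall w e, central w -> central e -> contr e (D w) + contr w (D e) = 0) ->
  forall e, D e = 0.
Proof.
move=> DD D_rE D_wedge D_skew.
pose G x y z := g (tens (contr y (D x)) z).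
have G0 x y z : central x -> central y -> central z -> G x y z = 0.
  apply: sym_antisym_eq0 => {x y z} [v | x y z cx cy cz | x y z cx cy cz].
  - exact: double_eq0.
  - by rewrite /G -{1}(sigma_ker_wedge (D_wedge x)) contr_sigma_swap.
  - rewrite /G; have /eqP := D_skew _ _ cx cy; rewrite addr_eq0 => /eqP ->.
    by rewrite (additive_funN _ (tensDl z)) (additive_funN _ gD).
have D_central w : central w -> D w = 0.
  move=> cw; apply: contr_nondeg => y cy; apply: g_tens_central_inj => z cz.
  by rewrite [LHS]G0 // (additive_fun0 (tensDl z)) (additive_fun0 gD).
apply: (central_ext (f' := fun=> 0)) => // [|w a cw]; first exact: additive_fun_zero.
by rewrite D_rE D_central // (additive_fun0 (rTD a)).
Qed.

Lemma levi_civita_unique nab nab' :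
  [/\ connection nab, torsionfree nab & compatible nab] ->
  [/\ connection nab', torsionfree nab' & compatible nab'] -> nab' =1 nab.
Proof.
move=> [[nabD _ nab_rE] nab_tf /compatibleE nab_comp].
move=> [[nab'D _ nab'_rE] nab'_tf /compatibleE nab'_comp] e.
apply/eqP; rewrite -subr_eq0; apply/eqP; move: e.
apply: symmetric_skew_vanish => [|e a|e|w e cw ce].
- exact: additive_fun_sub.
- by rewrite nab'_rE nab_rE (additive_funB _ _ (rTD a)) opprD addrACA subrr addr0.
- rewrite (additive_funB _ _ wedgeTD); apply/eqP; rewrite subr_eq0; apply/eqP.
  by apply: (addIr (d1 e)); rewrite nab'_tf nab_tf.
- by rewrite !(additive_funB _ _ (contrDr _)) addrACA -opprD nab'_comp // nab_comp // subrr.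
Qed.

End LeviCivita.


Theorem theorem6p1
  (R : realType) (A : algType R[i])
  (* the differential calculus in degrees <= 2 *)
  (E : zmodType) (lE : A -> E -> E) (rE : E -> A -> E)
  (O2 : zmodType) (lO : A -> O2 -> O2) (rO : O2 -> A -> O2)
  (d0 : A -> E) (d1 : E -> O2) (wedge : E -> E -> O2)
  (Hcalc : diff_calculus lE rE lO rO d0 d1 wedge)
  (HEproj : fg_projective rE)
  (* T = E (x)_A E, with its bimodule structure and the induced wedge *)
  (T : zmodType) (tens : E -> E -> T) (HT : is_tensor rE lE tens)
  (lT : A -> T -> T) (rT : T -> A -> T)
  (HlT : (forall a, additive_fun (lT a)) /\
         forall a x y, lT a (tens x y) = tens (lE a x) y)
  (HrT : (forall a, additive_fun (rT^~ a)) /\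
         forall a x y, rT (tens x y) a = tens x (rE y a))
  (wedgeT : T -> O2)
  (HwedgeT : additive_fun wedgeT /\ forall x y, wedgeT (tens x y) = wedge x y)
  (* (1) E = Z(E) (x)_{Z(A)} A via the multiplication map mu *)
  (T1 : zmodType) (t1 : E -> A -> T1) (HT1 : is_ztensor lE rE t1)
  (mu : T1 -> E)
  (Hmu : additive_fun mu /\
         forall w a, central_el lE rE w -> mu (t1 w a) = rE w a)
  (H1 : bijective mu)
  (* (2) T = ker wedge (+) F, F a right submodule, Q = wedge|_F an iso *)
  (F : T -> Prop)
  (HF : [/\ F 0, (forall t t', F t -> F t' -> F (t + t')),
            (forall t, F t -> F (- t)) & (forall t a, F t -> F (rT t a))])
  (H2sum : (forall t, exists k f, [/\ wedgeT k = 0, F f & t = k + f]) /\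
           (forall t, wedgeT t = 0 -> F t -> t = 0))
  (H2Q : (forall f f', F f -> F f' -> wedgeT f = wedgeT f' -> f = f') /\
         (forall w, exists f, F f /\ wedgeT f = w))
  (* P_sym: the idempotent with image ker wedge and kernel F *)
  (Psym : T -> T)
  (HPsym : forall t, wedgeT (Psym t) = 0 /\ F (t - Psym t))
  (* (3) sigma = 2 P_sym - 1 is the flip on central elements *)
  (H3 : forall w e, central_el lE rE w -> central_el lE rE e ->
          Psym (tens w e) *+ 2 - tens w e = tens e w)
  (* g : a pseudo-Riemannian bilinear metric *)
  (g : T -> A)
  (Hg : [/\ additive_fun g, (forall a t, g (lT a t) = a * g t),
            (forall a t, g (rT t a) = g t * a),
            (forall t, g (Psym t *+ 2 - t) = g t) &
            (forall e, (forall f, g (tens e f) = 0) -> e = 0) /\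
            (forall phi : E -> A, additive_fun phi ->
               (forall f b, phi (rE f b) = phi f * b) ->
               exists e, forall f, g (tens e f) = phi f)])
  (* T3 = E (x)_A (E (x)_A E) and the maps needed for compatibility *)
  (T3 : zmodType) (tens3 : E -> T -> T3) (HT3 : is_tensor rE lT tens3)
  (rtens : T -> E -> T3)  (* X (x) eta, for X in E (x) E *)
  (Hrtens : (forall e, additive_fun (rtens^~ e)) /\
            forall x y e, rtens (tens x y) e = tens3 x (tens y e))
  (sigma23 : T3 -> T3)     (* id (x) sigma *)
  (Hsigma23 : additive_fun sigma23 /\
              forall x t, sigma23 (tens3 x t) = tens3 x (Psym t *+ 2 - t))
  (gid : T3 -> E)          (* g (x) id *)
  (Hgid : additive_fun gid /\
          forall x y z, gid (tens3 x (tens y z)) = lE (g (tens x y)) z) :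
  let is_connection (nabla : E -> T) :=
    [/\ additive_fun nabla,
        (forall (k : R[i]) e, nabla (rE e k%:A) = rT (nabla e) k%:A) &
        (forall e a, nabla (rE e a) = rT (nabla e) a + tens e (d0 a))] in
  let torsionless (nabla : E -> T) := forall e, wedgeT (nabla e) + d1 e = 0 in
  let compatible (nabla : E -> T) :=
    forall w e, central_el lE rE w -> central_el lE rE e ->
      gid (sigma23 (rtens (nabla w) e) + tens3 w (nabla e)) = d0 (g (tens w e)) in
  exists nabla : E -> T,
    [/\ is_connection nabla, torsionless nabla & compatible nabla] /\
    forall nabla' : E -> T,
      [/\ is_connection nabla', torsionless nabla' & compatible nabla'] ->
      nabla' =1 nabla.
Proof.
move=> is_connection torsionless compatible_on_centre.
have [nab LC] : exists nab,
    [/\ is_connection nab, torsionless nab & compatible_on_centre nab].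
  by eapply levi_civita_exists; eassumption.
exists nab; split=> // nab' LC'.
by eapply levi_civita_unique; eassumption.
Qed.
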